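(* Let $\rho$ be a density matrix on $\mathbb{C}^d$ with spectral decomposition $\rho=\sum_{i=1}^d p_i|i\rangle\langle i|$ (eigenvalues listed with multiplicity, including zeros), and $H$ a Hermitian operator on $\mathbb{C}^d$. Let $S=\{p_i+p_j:p_i\neq p_j\}$ and $$J=\{\mu\in S:\ \langle i|H|j\rangle=0\ \text{for all } i,j \text{ with } p_i\neq p_j \text{ and } p_i+p_j=\mu\}.$$ Then $n^*=\mathcal{N}[S]-\mathcal{N}[J]$, where $\mathcal{N}[\cdot]$ denotes the number of distinct elements of a set.
   Context: Let $\mathcal{R}_\rho(X)=\frac12(\rho X+X\rho)$ and define the Krylov subspaces $\mathcal{K}_n=\mathrm{span}\{i[\rho,H],\mathcal{R}_\rho(i[\rho,H]),\dots,\mathcal{R}_\rho^{n-1}(i[\rho,H])\}$ for $n\ge1$. These are nested and eventually stabilize; $n^*$ denotes the dimension of the stabilized subspace $\bigcup_n\mathcal{K}_n$. Equivalently, when $i[\rho,H]\ne0$, $\dim\mathcal{K}_n=n$ for $n\le n^*$ and $n^*$ is the smallest $n$ with $\mathcal{K}_n=\mathcal{K}_{n+1}$. *)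

From HB Require Import structures.
From mathcomp Require Import all_boot all_order all_algebra.
From mathcomp Require Import sesquilinear spectral.
Set Implicit Arguments. Unset Strict Implicit. Unset Printing Implicit Defensive.
Import Order.TTheory GRing.Theory Num.Theory.
Local Open Scope ring_scope.

(* Complex matrices: C is any numeric closed field (e.g. algC, or complex R). *)

Definition jordanR (C : numClosedFieldType) (d : nat) (rho X : 'M[C]_d) : 'M[C]_d :=
  2^-1 *: (rho *m X + X *m rho).

Definition icomm (C : numClosedFieldType) (d : nat) (rho H : 'M[C]_d) : 'M[C]_d :=
  'i *: (rho *m H - H *m rho).

(* Krylov subspace K_n = span { R^k (i[rho,H]) : k < n }, as a row space of
   vectorized matrices (mxalgebra). *)
Definition krylov (C : numClosedFieldType) (d : nat) (rho H : 'M[C]_d) (n : nat)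
  : 'M[C]_(d * d) :=
  (\sum_(k < n) <<mxvec (iter k (jordanR rho) (icomm rho H))>>)%MS.

(* m is the dimension of the stabilized subspace \bigcup_n K_n: since the K_n are
   nested, this is the supremum of their dimensions. *)
Definition krylov_stable_dim (C : numClosedFieldType) (d : nat) (rho H : 'M[C]_d)
  (m : nat) : Prop :=
  (forall n, \rank (krylov rho H n) <= m)%N /\ exists n, \rank (krylov rho H n) = m.

Definition setS (C : numClosedFieldType) (d : nat) (p : 'I_d -> C) : seq C :=
  undup [seq p ij.1 + p ij.2 | ij <- enum [pred ij : 'I_d * 'I_d | p ij.1 != p ij.2]].

(* J = { mu in S : <i|H|j> = 0 whenever p_i <> p_j and p_i + p_j = mu },
   where Hb i j = <i|H|j> is the matrix of H in the eigenbasis of rho. *)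
Definition setJ (C : numClosedFieldType) (d : nat) (p : 'I_d -> C) (Hb : 'M[C]_d)
  : seq C :=
  [seq mu <- setS p |
     [forall i : 'I_d, forall j : 'I_d,
        ((p i != p j) && (p i + p j == mu)) ==> (Hb i j == 0)]].

From HB Require Import structures.
From mathcomp Require Import all_boot all_order all_algebra.
From mathcomp Require Import sesquilinear spectral.
From mathcomp Require Import ring.
Set Implicit Arguments. Unset Strict Implicit. Unset Printing Implicit Defensive.
Import Order.TTheory GRing.Theory Num.Theory.
Local Open Scope ring_scope.
Local Open Scope sesquilinear_scope.

(* In the eigenbasis of rho, R_rho multiplies the (i,j) entry by (p_i + p_j)/2
   and i[rho,H] has entries c_ij = i (p_i - p_j) <i|H|j>.  Hence
   R_rho^k(i[rho,H]) = sum_mu (mu/2)^k B_mu, where mu ranges over the distinct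
   values of p_i + p_j with c_ij <> 0 and B_mu is c restricted to the entries
   with p_i + p_j = mu.  The B_mu have disjoint nonempty supports, so the
   Krylov vectors are a Vandermonde matrix on distinct nodes times a row-free
   matrix: the Krylov dimension is at most the number of such mu, which is
   |S| - |J|, and reaches it after that many steps. *)

Lemma sumsmx_genmx_rows (F : fieldType) m n (A : 'M[F]_(m, n)) :
  (\sum_(k < m) <<row k A>> :=: A)%MS.
Proof.
apply/eqmxP/andP; split.
  by apply/sumsmx_subP => k _; rewrite genmxE row_sub.
by apply/row_subP => k; rewrite (sumsmx_sup k) // genmxE.
Qed.

Lemma mxrank_mul_lin_can (F : fieldType) k m1 n1 m2 n2
    (f : {linear 'M[F]_(m1, n1) -> 'M[F]_(m2, n2)})
    (g : {linear 'M[F]_(m2, n2) -> 'M[F]_(m1, n1)}) (A : 'M[F]_(k, m1 * n1)) :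
  cancel f g -> \rank (A *m lin_mx f) = \rank A.
Proof.
move=> fK; apply/eqP; rewrite eqn_leq mxrankM_maxl /=.
have {1}-> : A = A *m lin_mx f *m lin_mx g.
  by apply/row_matrixP => i; rewrite !row_mul !mul_rV_lin /= mxvecK fK vec_mxK.
exact: mxrankM_maxl.
Qed.

Lemma Vandermonde_unit (F : fieldType) n (a : 'rV[F]_n) :
  injective (a 0) -> Vandermonde n a \in unitmx.
Proof.
move=> a_inj; rewrite unitmxE det_Vandermonde unitfE.
apply/prodf_neq0 => i _; apply/prodf_neq0 => j lt_ij; rewrite subr_eq0.
by apply: contraTneq lt_ij => /a_inj ->; rewrite ltnn.
Qed.

Section WeightedPowers.
Variables (F : fieldType) (m n : nat).
Implicit Types (w c : 'M[F]_(m, n)).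

Definition support_values w c : seq F :=
  undup [seq w ij.1 ij.2 | ij <- enum [pred ij : 'I_m * 'I_n | c ij.1 ij.2 != 0]].

Lemma support_valuesP w c x :
  reflect (exists i j, c i j != 0 /\ w i j = x) (x \in support_values w c).
Proof.
rewrite mem_undup; apply: (iffP mapP) => [[[i j]] /= |[i [j [cij <-]]]].
  by rewrite mem_enum inE /= => cij ->; exists i, j.
by exists (i, j); rewrite // mem_enum inE.
Qed.

Lemma support_values_scale s w c : s != 0 ->
  support_values (s *: w) c = map ( *%R s) (support_values w c).
Proof.
move=> s_nz; rewrite -undup_map_inj; last exact: mulfI.
by rewrite -map_comp; congr undup; apply: eq_map => ij; rewrite mxE.
Qed.

Definition weighted_powers_mx N w c : 'M[F]_(N, m * n) :=
  \matrix_(k < N) mxvec (\matrix_(i, j) (w i j ^+ k * c i j)).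

Definition level_mx w c : 'M[F]_(size (support_values w c), m * n) :=
  \matrix_(l < size (support_values w c))
    mxvec (\matrix_(i, j) (if w i j == (support_values w c)`_l then c i j else 0)).

Lemma weighted_powers_mxE N w c :
  weighted_powers_mx N w c =
  Vandermonde N (\row_(l < size (support_values w c)) (support_values w c)`_l)
    *m level_mx w c.
Proof.
have vals_uniq : uniq (support_values w c) by apply: undup_uniq.
apply/matrixP => k ij; case/mxvec_indexP: ij => i j.
rewrite !mxE mxvecE mxE.
have [c0|cij] := eqVneq (c i j) 0.
  by rewrite c0 mulr0 big1 // => l _; rewrite !mxE mxvecE mxE c0 if_same mulr0.
have : w i j \in support_values w c by apply/support_valuesP; exists i, j.
rewrite -index_mem => lt_ij_vals.
rewrite (bigD1 (Ordinal lt_ij_vals)) //= big1 ?addr0.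
  by rewrite !mxE mxvecE mxE /= nth_index ?eqxx // -index_mem.
move=> l ne_l; rewrite !mxE mxvecE mxE.
case: ifP => [/eqP wij|]; last by rewrite mulr0.
by case/eqP: ne_l; apply: val_inj; rewrite /= wij index_uniq.
Qed.

Lemma level_mx_free w c : row_free (level_mx w c).
Proof.
have vals_uniq : uniq (support_values w c) by apply: undup_uniq.
rewrite /row_free eqn_leq rank_leq_row /= -subn_eq0 -mxrank_ker mxrank_eq0.
apply/rowV0P => u /sub_kermxP u_ker; apply/rowP => l; rewrite mxE.
have /support_valuesP[i [j [cij wij]]] : (support_values w c)`_l \in support_values w c.
  by rewrite mem_nth.
have := congr1 (fun M : 'rV_(m * n) => M 0 (mxvec_index i j)) u_ker.
rewrite !mxE (bigD1 l) //= big1 ?addr0.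
  by rewrite !mxE mxvecE mxE wij eqxx => /eqP; rewrite mulf_eq0 (negPf cij) orbF => /eqP.
move=> l' ne_l'; rewrite !mxE mxvecE mxE wij nth_uniq //.
case: eqP => [/val_inj eq_l|_]; last by rewrite mulr0.
by rewrite eq_l eqxx in ne_l'.
Qed.

Lemma mxrank_weighted_powers_mx N w c :
  \rank (weighted_powers_mx N w c) =
  \rank (Vandermonde N (\row_(l < size (support_values w c)) (support_values w c)`_l)).
Proof. by rewrite weighted_powers_mxE mxrankMfree ?level_mx_free. Qed.

Lemma mxrank_weighted_powers_mx_le N w c :
  (\rank (weighted_powers_mx N w c) <= size (support_values w c))%N.
Proof. by rewrite mxrank_weighted_powers_mx rank_leq_col. Qed.

Lemma mxrank_weighted_powers_mx_full w c :
  \rank (weighted_powers_mx (size (support_values w c)) w c) =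
  size (support_values w c).
Proof.
rewrite mxrank_weighted_powers_mx mxrank_unit // Vandermonde_unit // => l l'.
by rewrite !mxE => /eqP; rewrite nth_uniq ?undup_uniq // => /eqP /val_inj.
Qed.

End WeightedPowers.

Section Krylov.
Variables (C : numClosedFieldType) (d : nat).
Implicit Types (rho H X : 'M[C]_d).

Definition krylov_mx rho H n : 'M[C]_(n, d * d) :=
  \matrix_(k < n) mxvec (iter k (jordanR rho) (icomm rho H)).

Lemma mxrank_krylov rho H n : \rank (krylov rho H n) = \rank (krylov_mx rho H n).
Proof.
rewrite -(sumsmx_genmx_rows (krylov_mx rho H n)).
by congr (\rank _); apply: eq_bigr => k _; rewrite rowK.
Qed.

Section Conjugation.
Variables U V : 'M[C]_d.
Hypothesis VU : V *m U = 1%:M.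
Local Notation conj X := (U *m X *m V).

Lemma conj_mulmx X Y : conj (X *m Y) = conj X *m conj Y.
Proof. by rewrite !mulmxA -(mulmxA _ V U) VU mulmx1. Qed.

Lemma jordanR_conj rho X : conj (jordanR rho X) = jordanR (conj rho) (conj X).
Proof. by rewrite /jordanR -scalemxAr -scalemxAl mulmxDr mulmxDl !conj_mulmx. Qed.

Lemma icomm_conj rho H : conj (icomm rho H) = icomm (conj rho) (conj H).
Proof. by rewrite /icomm -scalemxAr -scalemxAl mulmxBr mulmxBl !conj_mulmx. Qed.

Lemma krylov_mx_conj rho H n :
  krylov_mx (conj rho) (conj H) n = krylov_mx rho H n *m lin_mx (mulmxr V \o mulmx U).
Proof.
apply/row_matrixP => k; rewrite row_mul !rowK mul_vec_lin /=; congr mxvec.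
by elim: {k}(k : nat) => [|k IHk] /=; rewrite ?icomm_conj // jordanR_conj IHk.
Qed.

Lemma mxrank_krylov_mx_conj rho H n :
  \rank (krylov_mx (conj rho) (conj H) n) = \rank (krylov_mx rho H n).
Proof.
rewrite krylov_mx_conj (mxrank_mul_lin_can _ (g := mulmxr U \o mulmx V)) //.
by move=> X /=; rewrite !mulmxA VU mul1mx -mulmxA VU mulmx1.
Qed.

End Conjugation.

Section Diagonal.
Variable a : 'I_d -> C.
Local Notation D := (diag_mx (\row_i a i)).

Lemma jordanR_diag X : jordanR D X = \matrix_(i, j) (2^-1 * (a i + a j) * X i j).
Proof.
by rewrite /jordanR mul_diag_mx mul_mx_diag; apply/matrixP => i j; rewrite !mxE; ring.
Qed.

Lemma icomm_diag X : icomm D X = \matrix_(i, j) ('i * (a i - a j) * X i j).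
Proof.
by rewrite /icomm mul_diag_mx mul_mx_diag; apply/matrixP => i j; rewrite !mxE; ring.
Qed.

Lemma krylov_mx_diag H n :
  krylov_mx D H n =
  weighted_powers_mx n (2^-1 *: \matrix_(i, j) (a i + a j)) (icomm D H).
Proof.
apply/row_matrixP => k; rewrite !rowK; congr mxvec.
elim: {k}(k : nat) => [|k IHk]; apply/matrixP => i j; first by rewrite !mxE mul1r.
by rewrite /= jordanR_diag IHk !mxE exprS mulrA.
Qed.

End Diagonal.

Lemma size_setS_setJ (p : 'I_d -> C) (Hb : 'M[C]_d) :
  (size (setS p) - size (setJ p Hb))%N =
  size (support_values (\matrix_(i, j) (p i + p j)) (icomm (diag_mx (\row_i p i)) Hb)).
Proof.
rewrite /setJ; set P := (fun mu => _).
rewrite size_filter -(count_predC P (setS p)) addKn -size_filter.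
apply: perm_size; apply: uniq_perm; rewrite ?filter_uniq ?undup_uniq // => mu.
rewrite mem_filter /= icomm_diag; apply/idP/idP.
  case/andP => /forallPn [i] /forallPn [j]; rewrite negb_imply.
  case/andP => /andP [pij /eqP <-] Hij _; apply/support_valuesP; exists i, j.
  by rewrite !mxE !mulf_neq0 ?neq0Ci ?subr_eq0.
case/support_valuesP => i [j]; rewrite !mxE !mulf_eq0 !negb_or subr_eq0.
case=> /andP [/andP [_ pij] Hij] <-; apply/andP; split.
  by apply/forallPn; exists i; apply/forallPn; exists j; rewrite negb_imply pij eqxx.
by rewrite mem_undup; apply/mapP; exists (i, j); rewrite ?mem_enum ?inE.
Qed.

End Krylov.

Theorem mainTheorem3 (C : numClosedFieldType) (d : nat)
  (rho H V : 'M[C]_d) (p : 'I_d -> C) :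
  V \is unitarymx ->
  (forall i, 0 <= p i) ->
  \sum_i p i = 1 ->
  rho = V *m diag_mx (\row_i p i) *m V ^t* ->
  H ^t* = H ->
  krylov_stable_dim rho H
    (size (setS p) - size (setJ p (V ^t* *m H *m V)))%N.
Proof.
move=> V_unitary _ _ rhoE _.
have VVt : V *m V^t* = 1%:M by apply/unitarymxP.
have VtV : V^t* *m V = 1%:M.
  by rewrite -invmx_unitary // mulVmx // unitarymx_unit.
have rhoD : V^t* *m rho *m V = diag_mx (\row_i p i).
  by rewrite rhoE !mulmxA VtV mul1mx -mulmxA VtV mulmx1.
set w := \matrix_(i, j) (p i + p j).
set c := icomm (diag_mx (\row_i p i)) (V^t* *m H *m V).
have rankE n : \rank (krylov rho H n) = \rank (weighted_powers_mx n (2^-1 *: w) c).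
  by rewrite mxrank_krylov -(mxrank_krylov_mx_conj VVt) rhoD krylov_mx_diag.
have half_nz : (2^-1 : C) != 0 by rewrite invr_eq0 pnatr_eq0.
rewrite size_setS_setJ -(size_map ( *%R 2^-1)) -support_values_scale //.
split => [n|]; first by rewrite rankE mxrank_weighted_powers_mx_le.
exists (size (support_values (2^-1 *: w) c)).
by rewrite rankE mxrank_weighted_powers_mx_full.
Qed.
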